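(* For any coprime $r>1$ and $0<a<r$, on the Danilov resolution of $\frac1r(1,a,r-a)$ one has $X_i=D_X+R_i-R_{i+1}$ for all $i=0,\dots,r-1$ (indices mod $r$).
   Context: Notation: for integers $s$ and $t>0$, $\langle s\rangle_t$ is the least non-negative integer congruent to $s$ modulo $t$. A pair of integers $(r,a)$ is admissible if $r\ge1$, $0\le a<r$, $\gcd(r,a)=1$ (so $a=0$ only for $r=1$). For admissible $(r,a)$ put $N(r,a)=\mathbb Z^3+\mathbb Z\cdot\frac1r(1,a,r-a)\subset\mathbb Q^3$; $e_1,e_2,e_3$ is the standard basis, $e_j^*$ the $j$-th coordinate function, and $\Delta(r,a)$ the cone spanned by $e_1,e_2,e_3$. Let $b$ be an inverse of $a$ modulo $r$ and $p_i=\frac1r(\langle -ib\rangle_r,r-i,i)$, $i=0,\dots,r$ (so $p_0=e_2$, $p_r=e_3$, $p_{r-a}=\frac1r(1,a,r-a)$). For $r>1$ let $(r_L,a_L)=(r-a,\langle r\rangle_{r-a})$, $(r_R,a_R)=(a,\langle -r\rangle_a)$; there are lattice isomorphisms $L:N(r_L,a_L)\to N(r,a)$, $R:N(r_R,a_R)\to N(r,a)$ with $L(e_1)=e_1$, $L(e_2)=e_2$, $L(e_3)=p_{r-a}$, $R(e_1)=e_1$, $R(e_2)=p_{r-a}$, $R(e_3)=e_3$. The Danilov fan $\Sigma(r,a)$ is defined recursively: $\Sigma(1,0)$ is $\Delta(1,0)$ with its faces; for $r>1$, $\Sigma(r,a)$ consists of the cone spanned by $e_2,e_3,p_{r-a}$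 with its faces, together with $L(\Sigma(r_L,a_L))$ and $R(\Sigma(r_R,a_R))$. The Danilov resolution $Y$ is the smooth toric variety of $\Sigma(r,a)$, with torus $T$; its rays are spanned by $e_1,p_0,\dots,p_r$; $D_i$ is the $T$-invariant prime divisor of the ray through $p_i$ and $E_j$ that of $e_j$. The permutation $\tau(r,a,\cdot)$ of $\{0,\dots,r-1\}$: if $a\in\{1,r-1\}$, $\tau(r,a,i)=\langle ai-1\rangle_r$; otherwise $\tau(r,a,i)=\tau(r-a,\langle r\rangle_{r-a},\langle i\rangle_{r-a})$ for $i\ge a$ and $\tau(r,a,i)=(r-a)+\tau(a,\langle -r\rangle_a,i)$ for $i<a$. With indices mod $r$, on $Y$ define $Z_i=\sum_{k=\tau(r,a,i)+1}^{r}D_k$ ($i=0,\dots,r-1$) and let $X_0,\dots,X_{r-1}$ be the unique divisors with $X_0=E_1$ and $X_i+Z_{i+1}=Z_i+X_{i-a}$ for all $i$. Define the $\mathbb Q$-divisors $D_X=E_1+\sum_{i=0}^r e_1^*(p_i)D_i$, $D_Z=\sum_{i=0}^r e_3^*(p_i)D_i$, and let $R_0,\dots,R_{r-1}$ be the unique $\mathbb Q$-divisors with $R_0=0$ and $Z_i=D_Z+R_i-R_{i-a}$ for all $i$. *)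

From mathcomp Require Import all_boot all_order all_algebra.
Set Implicit Arguments. Unset Strict Implicit. Unset Printing Implicit Defensive.
Import Order.TTheory GRing.Theory Num.Theory.
Local Open Scope ring_scope.

Definition negmod (n t : nat) : nat := ((t - n %% t) %% t)%N.

(* The permutation tau(r,a,.), defined by the paper's recursion, with fuel.
   Each recursive call strictly decreases r, so fuel r suffices. *)
Fixpoint tau_fuel (fuel r a i : nat) : nat :=
  match fuel with
  | 0 => 0%N
  | fuel'.+1 =>
    if (a == 1%N) || (a == r.-1) then ((a * i + r - 1) %% r)%N
    else if (a <= i)%N then tau_fuel fuel' (r - a) (r %% (r - a)) (i %% (r - a))
    else ((r - a) + tau_fuel fuel' a (negmod r a) i)%N
  end.

Definition tau (r a i : nat) : nat := tau_fuel r r a i.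

(* T-invariant Q-divisors on the Danilov resolution Y: formal Q-combinations of
   the T-invariant prime divisors, i.e. of the rays e_1, p_0, ..., p_r.
   [None] stands for E_1 and [Some k] for D_k. *)
Definition qdiv (r : nat) := {ffun option 'I_r.+1 -> rat}.

Definition E1 (r : nat) : qdiv r :=
  finfun (fun x : option 'I_r.+1 => (if x is None then 1 else 0) : rat).

Definition Zdiv (r a i : nat) : qdiv r :=
  finfun (fun x : option 'I_r.+1 =>
    (if x is Some k then (if (tau r a i < k)%N then 1 else 0) else 0) : rat).

(* p_i = (1/r)(<-i b>_r, r - i, i); e_1^*(p_i) = <-ib>_r / r, e_3^*(p_i) = i/r. *)
Definition e1p (r b k : nat) : rat := (negmod (k * b) r)%:R / r%:R.
Definition e3p (r k : nat) : rat := k%:R / r%:R.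

Definition DXdiv (r b : nat) : qdiv r :=
  finfun (fun x : option 'I_r.+1 => (if x is Some k then e1p r b k else 1) : rat).

Definition DZdiv (r : nat) : qdiv r :=
  finfun (fun x : option 'I_r.+1 => (if x is Some k then e3p r k else 0) : rat).

From mathcomp Require Import all_boot all_order all_algebra.
From mathcomp Require Import zify lra ring.
Set Implicit Arguments. Unset Strict Implicit. Unset Printing Implicit Defensive.
Import GRing.Theory.

(* Put Y_i := D_X + R_i - R_{i+1}.  The relations defining Z and R give
   Y_i - Y_{i-a} = Z_i - Z_{i+1}, the recursion satisfied by X, and the residues
   j a (mod r) run through all of Z/r, so everything reduces to X_0 = Y_0, that is
   R_1 = D_X - E_1.  Summing the relation for R along the orbit, the D_k-coefficient
   of R_{ja} is #{1 <= l <= j : tau(<la>_r) < k} - jk/r, and for j = b this count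
   must be the ceiling of bk/r.  That is proved along the recursion defining tau:
   with ab = qr + 1, the multiples la with <la>_r >= a are, modulo r - a, the
   first b - q multiples of <r>_{r-a}, an element with inverse b - q, and those
   with <la>_r < a are, modulo a, the first q multiples of <-r>_a, an element with
   inverse q; the two ceilings for the smaller problems recombine into ceil(bk/r). *)

Lemma negmodDn n t : 0 < t -> negmod n t + n = 0 %[mod t].
Proof.
move=> t_gt0; rewrite /negmod modnDml mod0n.
have lt_nt : n %% t < t by rewrite ltn_mod.
have -> : t - n %% t + n = (n %/ t).+1 * t by rewrite mulSnr; lia.
exact: modnMl.
Qed.

Lemma negmod_ceil m n t : 0 < t -> m <= n * t < m + t -> n * t = m + negmod m t.
Proof.
move=> t_gt0 /andP[lb ub]; rewrite /negmod.
have lt_mt : m %% t < t by rewrite ltn_mod.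
have def_m := divn_eq m t.
set q := m %/ t in def_m; set s := m %% t in def_m lt_mt *.
have n_q : n = q \/ n = q.+1.
  have lo : q <= n by rewrite -(leq_pmul2r t_gt0); lia.
  have hi : n < q.+2 by rewrite -(ltn_pmul2r t_gt0) !mulSnr; lia.
  lia.
case: n_q lb ub => -> lb ub.
- have -> : s = 0 by lia.
  by rewrite subn0 modnn; lia.
- rewrite mulSnr in lb ub *.
  by rewrite modn_small; lia.
Qed.

Lemma negmod_mod n t : negmod (n %% t) t = negmod n t.
Proof. by rewrite /negmod modn_mod. Qed.

Lemma modn_orbit_pred i a r : a <= r -> ((i + a) %% r + r - a) %% r = i %% r.
Proof. by move=> le_ar; rewrite -addnBA // modnDml -addnA subnKC // modnDr. Qed.

Definition count_lt (g : nat -> nat) (m k : nat) : nat :=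
  count (fun j => g j < k) (iota 1 m).

Lemma count_ltS g m k : count_lt g m.+1 k = count_lt g m k + (g m.+1 < k).
Proof. by rewrite /count_lt -[m.+1]addn1 iotaD count_cat /= add1n addn0 addn1. Qed.

Lemma count_lt_k0 g m : count_lt g m 0 = 0.
Proof. by elim: m => // m IHm; rewrite count_ltS IHm. Qed.

Lemma count_lt_le g m k : count_lt g m k <= m.
Proof. by rewrite -[leqRHS](size_iota 1) count_size. Qed.

Lemma count_lt_mono g m k1 k2 : k1 <= k2 -> count_lt g m k1 <= count_lt g m k2.
Proof. by move=> le_k; apply: sub_count => j /leq_trans; apply. Qed.

Lemma eq_count_lt g1 g2 m k : {in [pred j | 0 < j <= m], g1 =1 g2} ->
  count_lt g1 m k = count_lt g2 m k.
Proof.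
move=> eq_g; apply: eq_in_count => j; rewrite mem_iota add1n ltnS => jm.
by rewrite eq_g.
Qed.

Lemma count_lt_pred m k : count_lt predn m k = minn m k.
Proof.
elim: m => [|m IHm]; first by rewrite min0n.
by rewrite count_ltS IHm /=; case: ltnP => lt_mk; lia.
Qed.

Lemma modn_mul_carry m a r : 0 < a -> m * a %% r < a ->
  m * a %% r = m * a %/ r * negmod r a %% a.
Proof.
move=> a_gt0 lt_sa; rewrite -{1}(modn_small lt_sa); apply/eqP.
rewrite -(eqn_modDr (m * a %/ r * r)) addnC -divn_eq modnMl.
by rewrite -mulnDr -modnMmr negmodDn // mod0n muln0 mod0n.
Qed.

Lemma modn_mul_nocarry m a r : a < r ->
  m * a %% r %% (r - a) = (m - m * a %/ r) * (r %% (r - a)) %% (r - a).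
Proof.
move=> lt_ar; rewrite modnMmr; apply/eqP.
have le_cm : m * a %/ r <= m.
  rewrite -(leq_pmul2r (leq_ltn_trans (leq0n a) lt_ar)).
  by rewrite (leq_trans (leq_divM _ _)) // leq_mul2l (ltnW lt_ar) orbT.
set c := m * a %/ r in le_cm *; set s := m * a %% r.
have def_ma : c * (r - a) + (s + c * a) = m * a.
  by rewrite addnCA -mulnDr subnK ?(ltnW lt_ar) // addnC -divn_eq.
have def_mcr : (m - c) * r + c * a = (m - c) * (r - a) + m * a.
  by rewrite -{3}(subnK le_cm) mulnDl addnA -mulnDr subnK ?(ltnW lt_ar).
by rewrite -(eqn_modDr (c * a)) def_mcr -def_ma !modnMDl.
Qed.

Definition tau_orbit (f r a j : nat) : nat := tau_fuel f r a (j * a %% r).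

Section OrbitSplit.
Variables (f r a : nat).
Hypotheses (a_gt0 : 0 < a) (lt_ar : a < r) (a_neq1 : a != 1) (a_neq_pred : a != r.-1).

Lemma tau_orbit_split m k :
  count_lt (tau_orbit f.+1 r a) m k =
  count_lt (tau_orbit f (r - a) (r %% (r - a))) (m - m * a %/ r) k
  + count_lt (tau_orbit f a (negmod r a)) (m * a %/ r) (k - (r - a)).
Proof.
have r_gt0 : 0 < r by apply: leq_ltn_trans lt_ar.
have tau_step i : tau_fuel f.+1 r a i = if a <= i
    then tau_fuel f (r - a) (r %% (r - a)) (i %% (r - a))
    else r - a + tau_fuel f a (negmod r a) i.
  by rewrite /= (negbTE a_neq1) (negbTE a_neq_pred).
elim: m => [|m IHm]; first by rewrite mul0n div0n.
have le_cm : m * a %/ r <= m.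
  rewrite -(leq_pmul2r r_gt0) (leq_trans (leq_divM _ _)) //.
  by rewrite leq_mul2l (ltnW lt_ar) orbT.
have lt_sr : m * a %% r < r by rewrite ltn_mod.
rewrite count_ltS IHm [tau_orbit _ _ _ m.+1]/tau_orbit tau_step.
have divS : m.+1 * a %/ r = m * a %/ r + (r <= m * a %% r + a).
  by rewrite mulSnr divnD // (divn_small lt_ar) (modn_small lt_ar) addn0.
have modS : m.+1 * a %% r = m * a %% r + a - (r <= m * a %% r + a) * r.
  by rewrite mulSnr modnD // (modn_small lt_ar).
case: (leqP r (m * a %% r + a)) divS modS => [carry | nocarry] /=.
- rewrite addn1 mul1n => divS modS.
  have lt_s'a : m.+1 * a %% r < a by rewrite modS; lia.
  rewrite (leqNgt a) lt_s'a /= (modn_mul_carry a_gt0 lt_s'a) divS subSS.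
  by rewrite count_ltS -addnA ltn_subRL.
- rewrite addn0 mul0n subn0 => divS modS.
  have le_as' : a <= m.+1 * a %% r by rewrite modS leq_addl.
  rewrite le_as' modn_mul_nocarry // divS subSn // count_ltS.
  by rewrite addnAC.
Qed.

End OrbitSplit.

Lemma ceil_bounds_left b r bL rL k n : rL < r -> bL * r = b * rL + 1 -> k <= rL ->
  bL * k <= n * rL < bL * k + rL -> b * k <= n * r < b * k + r.
Proof. by move=> lt_r def_bL le_k /andP[lb ub]; apply/andP; split; nia. Qed.

Lemma ceil_bounds_right a b q r k n : a < r -> a * b = q * r + 1 -> k <= a ->
  q * k <= n * a < q * k + a -> b * k <= n * r + 1 < b * k + r.
Proof. by move=> lt_ar def_q le_k /andP[lb ub]; apply/andP; split; nia. Qed.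

Lemma modn_inv_pred r b : 1 < r -> r.-1 * b %% r = 1 -> b < r -> b = r.-1.
Proof.
move=> r_gt1 inv_b lt_br.
have : (1 + b) %% r = 0.
  by rewrite -inv_b modnDml -mulSnr (prednK (ltnW r_gt1)) modnMr.
rewrite add1n; case: (ltngtP b.+1 r) => [lt_b1r | lt_rb1 | <-] //.
- by rewrite modn_small.
- by rewrite ltnS leqNgt lt_br in lt_rb1.
Qed.

Lemma count_tau_orbit_one f r b k : 1 < r -> 1 * b %% r = 1 -> b < r -> k <= r ->
  b * k <= count_lt (tau_orbit f.+1 r 1) b k * r < b * k + r.
Proof.
move=> r_gt1 inv_b lt_br le_kr.
rewrite mul1n modn_small // in inv_b; rewrite inv_b /count_lt /tau_orbit /=.
rewrite !mul1n (modn_small r_gt1) addKn modnn.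
by case: k le_kr => [|k] le_kr; rewrite /= ?mul1n; lia.
Qed.

Lemma tau_orbit_pred f r j : 1 < r -> 0 < j < r -> tau_orbit f.+1 r r.-1 j = j.-1.
Proof.
case: r => [|[|p]] // _ /andP[]; case: j => [|i] // _ lt_ir.
rewrite /tau_orbit /= eqxx orbT -addnBA // subn1 /= -modnDml modnMmr modnDml.
have -> : p.+1 * (i.+1 * p.+1) + p.+1 = (i.+1 * p + 1) * p.+2 + i by ring.
by rewrite modnMDl modn_small // ltnW.
Qed.

Lemma count_tau_orbit_pred f r b k : 1 < r -> r.-1 * b %% r = 1 -> b < r -> k <= r ->
  b * k <= count_lt (tau_orbit f.+1 r r.-1) b k * r < b * k + r.
Proof.
move=> r_gt1 inv_b lt_br le_kr.
rewrite (modn_inv_pred r_gt1 inv_b lt_br).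
rewrite (@eq_count_lt _ predn) => [|j /andP[j_gt0 le_jr]]; last first.
  by apply: tau_orbit_pred => //; lia.
by rewrite count_lt_pred; case: (leqP r.-1 k) => le_k; apply/andP; split; nia.
Qed.

Section InverseSplit.
Variables (a b q r : nat).
Hypotheses (a_gt1 : 1 < a) (rBa_gt1 : 1 < r - a) (lt_br : b < r).
Hypothesis def_q : a * b = q * r + 1.

Lemma inv_split_lt : q < a /\ q < b.
Proof.
have r_gt0 : 0 < r by lia.
have lt_ab_ar : a * b < a * r by rewrite ltn_pmul2l ?(ltnW a_gt1).
have le_ab_rb : a * b <= r * b by rewrite leq_mul2r; apply/orP; right; lia.
by split; rewrite -(ltn_pmul2r r_gt0); lia.
Qed.

Lemma inv_left_eq : (b - q) * r = b * (r - a) + 1.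
Proof.
have [_ lt_qb] := inv_split_lt.
have le_qr_br : q * r <= b * r by rewrite leq_mul2r ltnW ?orbT.
have le_ba_br : b * a <= b * r by rewrite leq_mul2l; apply/orP; right; lia.
by rewrite mulnBl mulnBr (mulnC b a); lia.
Qed.

Lemma inv_left_lt : b - q < r - a.
Proof. have := inv_left_eq; nia. Qed.

Lemma modn_inv_left : r %% (r - a) * (b - q) %% (r - a) = 1.
Proof. by rewrite modnMml mulnC inv_left_eq modnMDl modn_small. Qed.

Lemma modn_inv_right : negmod r a * q %% a = 1.
Proof.
rewrite -(modn_small a_gt1); apply/eqP; rewrite -(eqn_modDr (q * r + 1)) addnA.
have -> : negmod r a * q + q * r = q * (negmod r a + r) by ring.
rewrite -modnDml -modnMmr negmodDn ?(ltnW a_gt1) // mod0n muln0 mod0n add0n.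
by rewrite -def_q -modnDmr modnMr addn0.
Qed.

End InverseSplit.

Section CeilStep.
Variable f : nat.
Hypothesis IHf : forall r a b k, r <= f -> 1 < r -> 0 < a < r ->
  a * b %% r = 1 -> b < r -> k <= r ->
  b * k <= count_lt (tau_orbit f r a) b k * r < b * k + r.

Lemma count_tau_orbit_ceil_split r a b k : r <= f.+1 -> 1 < a -> 1 < r - a ->
  a * b %% r = 1 -> b < r -> k <= r ->
  b * k <= count_lt (tau_orbit f.+1 r a) b k * r < b * k + r.
Proof.
move=> le_rf a_gt1 rBa_gt1 inv_b lt_br le_kr.
have lt_ar : a < r by lia.
rewrite tau_orbit_split ?(ltnW a_gt1) //; try lia; set q := b * a %/ r.
have def_q : a * b = q * r + 1 by rewrite -inv_b mulnC -divn_eq.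
have [lt_qa _] := inv_split_lt a_gt1 rBa_gt1 lt_br def_q.
have def_bL := inv_left_eq a_gt1 rBa_gt1 lt_br def_q.
have inv_left := modn_inv_left a_gt1 rBa_gt1 lt_br def_q.
have inv_right := modn_inv_right a_gt1 def_q.
have aL_gt0 : 0 < r %% (r - a).
  by move: inv_left; case: (r %% (r - a)) => //; rewrite mul0n mod0n.
have aR_gt0 : 0 < negmod r a.
  by move: inv_right; case: (negmod r a) => //; rewrite mul0n mod0n.
have IHleft k' : k' <= r - a -> (b - q) * k'
    <= count_lt (tau_orbit f (r - a) (r %% (r - a))) (b - q) k' * (r - a)
    < (b - q) * k' + (r - a).
  move=> le_k'; apply: IHf => //; first lia.
  - by rewrite aL_gt0 ltn_mod ltnW.
  - exact: inv_left_lt a_gt1 rBa_gt1 lt_br def_q.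
have IHright k' : k' <= a ->
    q * k' <= count_lt (tau_orbit f a (negmod r a)) q k' * a < q * k' + a.
  by move=> le_k'; apply: IHf; rewrite ?aR_gt0 ?ltn_mod //; lia.
case: (leqP k (r - a)) => [le_k | lt_k].
  have -> : k - (r - a) = 0 by apply/eqP; rewrite subn_eq0.
  rewrite count_lt_k0 addn0.
  by apply: ceil_bounds_left def_bL le_k (IHleft k le_k); lia.
have -> : count_lt (tau_orbit f (r - a) (r %% (r - a))) (b - q) k = b - q.
  apply/eqP; rewrite eqn_leq count_lt_le /=.
  have /andP[lb _] := IHleft (r - a) (leqnn _).
  apply: leq_trans (count_lt_mono _ _ (ltnW lt_k)).
  by rewrite -(leq_pmul2r (ltnW rBa_gt1)).
have le_kBr : k - (r - a) <= a by lia.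
have := ceil_bounds_right lt_ar def_q le_kBr (IHright _ le_kBr).
have -> : b * k = b * (r - a) + b * (k - (r - a)) by rewrite -mulnDr subnKC // ltnW.
by rewrite mulnDl def_bL => /andP[lb ub]; apply/andP; split; lia.
Qed.

End CeilStep.

Theorem count_tau_orbit_ceil f r a b k : r <= f -> 1 < r -> 0 < a < r ->
  a * b %% r = 1 -> b < r -> k <= r ->
  b * k <= count_lt (tau_orbit f r a) b k * r < b * k + r.
Proof.
elim: f r a b k => [|f IHf] r a b k le_rf r_gt1 /andP[a_gt0 lt_ar].
  by rewrite leqn0 in le_rf; rewrite (eqP le_rf) in r_gt1.
have [-> | a_neq1] := eqVneq a 1; first exact: count_tau_orbit_one.
have [-> | a_neq_pred] := eqVneq a r.-1; first exact: count_tau_orbit_pred.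
by apply: (count_tau_orbit_ceil_split IHf); lia.
Qed.

Local Open Scope ring_scope.

Section DanilovDivisors.
Variables (r a b : nat) (X R : nat -> qdiv r).
Hypotheses (r_gt1 : (1 < r)%N) (a_gt0 : (0 < a)%N) (lt_ar : (a < r)%N).
Hypothesis inv_b : (a * b %% r = 1)%N.
Hypothesis X0 : X 0%N = E1 r.
Hypothesis X_Z : forall i, (i < r)%N ->
  X i + Zdiv r a ((i + 1) %% r) = Zdiv r a i + X ((i + r - a) %% r).
Hypothesis R0 : R 0%N = 0.
Hypothesis Z_R : forall i, (i < r)%N ->
  Zdiv r a i = DZdiv r + R i - R ((i + r - a) %% r).

Let pred_orbit j : ((j.+1 * a %% r + r - a) %% r = j * a %% r)%N.
Proof. by rewrite mulSnr modn_orbit_pred // ltnW. Qed.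

Let pred_orbitS j : (((j.+1 * a %% r + 1) %% r + r - a) %% r = (j * a %% r + 1) %% r)%N.
Proof.
by rewrite modnDml mulSnr addnAC modn_orbit_pred ?modnDml // ltnW.
Qed.

Lemma R_orbit j x : R (j * a %% r)%N x =
  if x is Some k then (count_lt (tau_orbit r r a) j k)%:R - (j * k)%:R / r%:R else 0.
Proof.
elim: j x => [|j IHj] x.
  by rewrite mul0n mod0n R0 ffunE; case: x => // k; rewrite mul0n mul0r subrr.
have lt_jr : (j.+1 * a %% r < r)%N by rewrite ltn_mod; lia.
have := congr1 (fun F : qdiv r => F x) (Z_R lt_jr).
rewrite pred_orbit !ffunE IHj; case: x => [k|] /=; last by lra.
rewrite -[tau r a _]/(tau_orbit r r a j.+1) /e3p count_ltS [(j.+1 * k)%N]mulSnr.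
rewrite !natrD mulrDl.
by case: (tau_orbit r r a j.+1 < k)%N; rewrite [nat_of_bool _]/=; lra.
Qed.

Lemma R_one : R 1%N = DXdiv r b - E1 r.
Proof.
have r_gt0 : (0 < r)%N by lia.
have inv_b' : (a * (b %% r) %% r = 1)%N by rewrite modnMmr.
rewrite -[1%N]inv_b' mulnC.
apply/ffunP => -[k|]; rewrite R_orbit !ffunE /=; last by rewrite subrr.
have le_kr : (k <= r)%N by rewrite -ltnS.
have /(negmod_ceil r_gt0) ceil := count_tau_orbit_ceil (leqnn r) r_gt1
  (introT andP (conj a_gt0 lt_ar)) inv_b' (ltn_pmod _ r_gt0) le_kr.
have -> : (count_lt (tau_orbit r r a) (b %% r) k)%:R
    = ((b %% r * k)%:R + (negmod (b %% r * k) r)%:R) / r%:R :> rat.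
  by rewrite -natrD -ceil natrM mulfK // Num.Theory.pnatr_eq0 -lt0n.
by rewrite /e1p mulrDl subr0 addrC addKr -negmod_mod modnMml mulnC negmod_mod.
Qed.

Lemma X_orbit j :
  X (j * a %% r)%N = DXdiv r b + R (j * a %% r)%N - R ((j * a %% r + 1) %% r)%N.
Proof.
elim: j => [|j IHj].
  by rewrite mul0n mod0n add0n (modn_small r_gt1) X0 R0 R_one addr0 opprB addrC subrK.
have lt_jr : (j.+1 * a %% r < r)%N by rewrite ltn_mod; lia.
have lt_jr1 : ((j.+1 * a %% r + 1) %% r < r)%N by rewrite ltn_mod; lia.
apply/ffunP => x.
have := congr1 (fun F : qdiv r => F x) (X_Z lt_jr).
have := congr1 (fun F : qdiv r => F x) (Z_R lt_jr).
have := congr1 (fun F : qdiv r => F x) (Z_R lt_jr1).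
have := congr1 (fun F : qdiv r => F x) IHj.
by rewrite !pred_orbit pred_orbitS !ffunE; lra.
Qed.

End DanilovDivisors.

Theorem mainTheorem7 (r a b : nat)
  (hr : (1 < r)%N) (ha0 : (0 < a)%N) (har : (a < r)%N) (hcop : coprime r a)
  (hb : ((a * b) %% r = 1)%N)
  (X R : nat -> qdiv r)
  (hX0 : X 0%N = E1 r)
  (hX : forall i, (i < r)%N ->
     X i + Zdiv r a ((i + 1) %% r)%N = Zdiv r a i + X ((i + r - a) %% r)%N)
  (hR0 : R 0%N = 0)
  (hR : forall i, (i < r)%N ->
     Zdiv r a i = DZdiv r + R i - R ((i + r - a) %% r)%N) :
  forall i, (i < r)%N -> X i = DXdiv r b + R i - R ((i + 1) %% r)%N.
Proof.
(* [hcop] follows from [hb]. *)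
move=> i lt_ir.
have := X_orbit hr ha0 har hb hX0 hX hR0 hR (i * (b %% r)).
rewrite -mulnA -modnMmr [(b %% r * a)%N]mulnC [(a * _ %% r)%N]modnMmr hb muln1.
by rewrite modn_small.
Qed.
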